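(* Assume that for every $x\in V$ the functions $s\mapsto H(x,s)$ and $s\mapsto f_l(x,s)$ ($l=1,\dots,m$) are nondecreasing, and that $|H(x,s)-H(x,t)|\le|s-t|$ for all $x\in V$, $s,t\in[0,\infty)$. If $(u^1,\dots,u^m)$ and $(v^1,\dots,v^m)$ both solve the discrete system (S), then for every $l=1,\dots,m$, $$\max_{x\in V}\big(\hat{u}^l(x)-\hat{v}^l(x)\big)=\max_{\{x\in V:\ u^l(x)\le v^l(x)\}}\big(\hat{u}^l(x)-\hat{v}^l(x)\big),$$ and, symmetrically, $$\max_{x\in V}\big(\hat{v}^l(x)-\hat{u}^l(x)\big)=\max_{\{x\in V:\ v^l(x)\le u^l(x)\}}\big(\hat{v}^l(x)-\hat{u}^l(x)\big).$$
   Context: Let $G=(V,E)$ be a finite, connected, undirected graph with at least two vertices. For $x,y\in V$, $d(x,y)$ denotes the graph (shortest-path) distance, and $\deg(x)=|\{y\in V:(x,y)\in E\}|$. The boundary of $G$ is $$\partial G=\Big\{x\in V:\ \exists\, y\in V \text{ with } \tfrac{1}{\deg(x)}\textstyle\sum_{(x,z)\in E} d(z,y)<d(x,y)\Big\},$$ and the interior is $G^o=V\setminus\partial G$. For $r:V\to\mathbb{R}$, the mean value at $x$ is $\overline{r}(x)=\frac{1}{\deg(x)}\sum_{(x,y)\in E} r(y)$. Fix an integer $m\ge1$. Let $H:V\times[0,\infty)\to\mathbb{R}$ and $f_l:V\times[0,\infty)\to\mathbb{R}$ ($l=1,\dots,m$) be continuous in the second variable with $H(x,0)=0$ and $f_l(x,0)=0$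 for all $x\in V$; they are extended to negative arguments by $H(x,s)=-H(x,-s)$ and $f_l(x,s)=-f_l(x,-s)$ for $s<0$. Let $\phi^l:\partial G\to[0,\infty)$ ($l=1,\dots,m$) be boundary data satisfying $\phi^i(x)\phi^j(x)=0$ for all $x\in\partial G$ and $i\neq j$. The discrete system (S) for $(u^1,\dots,u^m)$, $u^l:V\to\mathbb{R}$, is: for every $l=1,\dots,m$, $$u^l(x)=\max\Big(H\Big(x,\ \overline{u}^l(x)-\sum_{p\neq l}\overline{u}^p(x)\Big)-f_l\big(x,u^l(x)\big),\ 0\Big)\quad (x\in G^o),\qquad u^l(x)=\phi^l(x)\quad (x\in\partial G).$$ For a vector $(u^1,\dots,u^m)$ we write $\hat{u}^l(x)=u^l(x)-\sum_{p\neq l}u^p(x)$, and similarly $\hat{v}^l$. *)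

From HB Require Import structures.
From mathcomp Require Import all_boot all_order all_algebra.
From mathcomp Require Import all_classical all_reals all_analysis.
Set Implicit Arguments. Unset Strict Implicit. Unset Printing Implicit Defensive.
Import Order.TTheory GRing.Theory Num.Theory.
Import numFieldNormedType.Exports.
Local Open Scope ring_scope.

Section Graph.
Variable V : finType.
Variable e : rel V.

Fixpoint walkn (n : nat) (x y : V) : bool :=
  if n is k.+1 then [exists z, e x z && walkn k z y] else x == y.

(* graph distance: least n with a walk of length n from x to y
   (in a connected graph this is < #|V|) *)
Definition gdist (x y : V) : nat :=
  find (fun n => walkn n x y) (iota 0 #|V|).

Definition gdeg (x : V) : nat := #|[pred y | e x y]|.

Definition conn_graph : Prop :=
  symmetric e /\ irreflexive e /\ (forall x y, connect e x y) /\ (1 < #|V|)%N.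

Variable R : realType.

Definition in_boundary (x : V) : Prop :=
  exists y : V,
    (\sum_(z | e x z) (gdist z y)%:R) / (gdeg x)%:R < ((gdist x y)%:R : R).

Definition mean (r : V -> R) (x : V) : R :=
  (\sum_(y | e x y) r y) / (gdeg x)%:R.

End Graph.

Definition oddext (R : realType) (h : R -> R) (s : R) : R :=
  if 0 <= s then h s else - h (- s).

Definition uhat (R : realType) (V : Type) (m : nat) (u : 'I_m -> V -> R)
  (l : 'I_m) (x : V) : R :=
  u l x - \sum_(p < m | p != l) u p x.

Definition solves_S (V : finType) (e : rel V) (R : realType) (m : nat)
  (H : V -> R -> R) (f : 'I_m -> V -> R -> R) (phi : 'I_m -> V -> R)
  (u : 'I_m -> V -> R) : Prop :=
  forall (l : 'I_m) (x : V),
    (~ in_boundary e R x ->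
       u l x = Num.max
         (oddext (H x) (mean e (u l) x - \sum_(p < m | p != l) mean e (u p) x)
            - oddext (f l x) (u l x)) 0) /\
    (in_boundary e R x -> u l x = phi l x).

(* The proof is a discrete maximum principle for w = û^l - v̂^l.  Solutions
   are nonnegative and segregated (at an interior vertex at most one
   component is positive), so û^l is read off the equation as H̃(mean û^l) - f_l
   where u^l > 0 and is bounded below by that expression elsewhere; here H̃ is
   the odd extension of H, nondecreasing and 1-Lipschitz.  Hence, at an interior
   vertex where v^l < u^l, monotonicity of f_l gives
   w <= H̃(mean û^l) - H̃(mean v̂^l), which is <= mean w when that difference
   is nonnegative and <= 0 otherwise.  A positive maximum of w attained only
   where v^l < u^l would thus spread to all neighbours and, by connectedness,
   reach a boundary vertex, where u = v and w = 0. *)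
From HB Require Import structures.
From mathcomp Require Import all_boot all_order all_algebra.
From mathcomp Require Import all_classical all_reals all_analysis.
From mathcomp Require Import lra.
Import Order.TTheory GRing.Theory Num.Theory.
Import numFieldNormedType.Exports.
Local Open Scope ring_scope.

Section GraphDistance.
Context {V : finType} (e : rel V).

Lemma walkn_path x p : path e x p -> walkn e (size p) x (last x p).
Proof.
elim: p x => [|y p IHp] x /=; first by rewrite eqxx.
by case/andP=> exy pxy; apply/existsP; exists y; rewrite exy IHp.
Qed.

Lemma connect_walkn {x y} :
  connect e x y -> exists2 n, (n < #|V|)%N & walkn e n x y.
Proof.
case/connectP=> p pxy ->; have [q pq uq _] := shortenP pxy.
exists (size q); last exact: walkn_path.
by have := max_card (mem (x :: q)); rewrite (card_uniqP uq) /=.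
Qed.

Lemma gdist_walkn {x y n} : (n < #|V|)%N -> walkn e n x y ->
  [/\ (gdist e x y <= n)%N, (gdist e x y < #|V|)%N & walkn e (gdist e x y) x y].
Proof.
move=> ltnV wn.
have hasw : has (fun k => walkn e k x y) (iota 0 #|V|).
  by apply/hasP; exists n; rewrite ?mem_iota.
have ltdV : (gdist e x y < #|V|)%N by move: hasw; rewrite has_find size_iota.
split=> //; last by have := nth_find 0 hasw; rewrite nth_iota.
rewrite leqNgt; apply/negP=> ltnd.
by have := before_find 0 ltnd; rewrite nth_iota // add0n wn.
Qed.

(* For x, y at maximal distance, no neighbour of x is farther from y and the
   first step of a shortest walk from x to y is closer, so x is a boundary vertex. *)
Lemma boundary_exists (R : realType) : conn_graph e -> exists b, in_boundary e R b.
Proof.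
case=> _ [_ [econn ltV1]].
have [x0 [y0 [_ _ neq_x0y0]]] := card_gt1P ltV1.
have gdistP a b : (gdist e a b < #|V|)%N /\ walkn e (gdist e a b) a b.
  have [n ltnV wn] := connect_walkn (econn a b).
  by have [] := gdist_walkn ltnV wn.
pose d (q : V * V) := gdist e q.1 q.2.
have [[x y] _ dmax] := @arg_maxnP _ (x0, y0) predT d isT.
have [ltdV wd] := gdistP x y.
have dx0y0_gt0 : (0 < gdist e x0 y0)%N.
  rewrite lt0n; apply: contra neq_x0y0 => /eqP d0.
  by have [_] := gdistP x0 y0; rewrite d0.
have dxy_gt0 : (0 < gdist e x y)%N := leq_trans dx0y0_gt0 (dmax (x0, y0) isT).
move: ltdV wd dxy_gt0; case def_d : (gdist e x y) => [//|k] ltdV.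
case/existsP=> z0 /andP[exz0 wz0] _; exists x, y.
have dz0 : (gdist e z0 y <= k)%N by have [] := gdist_walkn (ltnW ltdV) wz0.
have deg_gt0 : (0 < gdeg e x)%N by apply/card_gt0P; exists z0.
have sum_lt : (\sum_(z | e x z) gdist e z y < gdeg e x * k.+1)%N.
  rewrite /gdeg -sum1_card big_distrl /= (bigD1 z0) //= [X in (_ < X)%N](bigD1 z0) //=.
  rewrite -addSn; apply: leq_add; first by rewrite mul1n ltnS.
  by apply: leq_sum => z _; rewrite mul1n -def_d; apply: (dmax (z, y)).
by rewrite -natr_sum ltr_pdivrMr ?ltr0n // -natrM ltr_nat mulnC def_d.
Qed.

Lemma connect_invariant (P : V -> Prop) x y :
  (forall a b, P a -> e a b -> P b) -> P x -> connect e x y -> P y.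
Proof.
move=> Pe Px /connectP[p pxy ->]; elim: p x Px pxy => [|z p IHp] x Px //=.
by case/andP=> exz pzy; apply: IHp pzy; apply: Pe Px exz.
Qed.

End GraphDistance.

Section OddExtension.
Context {R : realType} {h : R -> R}.
Hypothesis h0 : h 0 = 0.
Hypothesis h_mono : forall s t, 0 <= s -> s <= t -> h s <= h t.

Lemma h_ge0 s : 0 <= s -> 0 <= h s.
Proof. by move=> s_ge0; rewrite -h0; apply: h_mono. Qed.

Lemma oddextN a : oddext h (- a) = - oddext h a.
Proof.
rewrite /oddext oppr_ge0 opprK.
by case: (ltgtP a 0) => [||->]; rewrite ?opprK ?oppr0 ?h0 ?oppr0.
Qed.

Lemma oddext_nondecreasing : {homo oddext h : a b / a <= b}.
Proof.
move=> a b leab; rewrite /oddext.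
case: (leP 0 a) => a0; case: (leP 0 b) => b0; first exact: h_mono.
- lra.
- by have := @h_ge0 (- a) (ltac:(lra)); have := @h_ge0 b b0; lra.
- by rewrite lerN2; apply: h_mono; lra.
Qed.

Hypothesis h_lip : forall s t, 0 <= s -> 0 <= t -> `|h s - h t| <= `|s - t|.

Lemma h_le s : 0 <= s -> h s <= s.
Proof.
move=> s_ge0; have := h_lip _ _ s_ge0 (lexx 0); rewrite h0 !subr0 (ger0_norm s_ge0).
exact/le_trans/ler_norm.
Qed.

Lemma oddext_lip {a b} : b <= a -> oddext h a - oddext h b <= a - b.
Proof.
move=> leba; have ab_ge0 : 0 <= a - b by lra.
rewrite /oddext; case: (leP 0 a) => a0; case: (leP 0 b) => b0.
- have := h_lip _ _ a0 b0; rewrite (ger0_norm ab_ge0); exact/le_trans/ler_norm.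
- by have := @h_le a a0; have := @h_le (- b) (ltac:(lra)); lra.
- lra.
- have := h_lip (- b) (- a) (ltac:(lra)) (ltac:(lra)).
  rewrite [- b - - a]addrC opprK (ger0_norm ab_ge0) => /(le_trans (ler_norm _)).
  lra.
Qed.

End OddExtension.

Section Mean.
Context {V : finType} (e : rel V) {R : realType}.

Lemma mean_ge0 (g : V -> R) x : (forall z, 0 <= g z) -> 0 <= mean e g x.
Proof. by move=> g_ge0; rewrite divr_ge0 // sumr_ge0. Qed.

Lemma meanB (g k : V -> R) x :
  mean e (fun z => g z - k z) x = mean e g x - mean e k x.
Proof. by rewrite /mean -mulrBl sumrB. Qed.

Lemma mean_uhat m (u : 'I_m -> V -> R) l x :
  mean e (uhat u l) x = uhat (fun q => mean e (u q)) l x.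
Proof.
rewrite /mean /uhat -mulr_suml -mulrBl sumrB.
by congr ((_ - _) * _); rewrite exchange_big.
Qed.

Lemma mean_ge_max_nbr (g : V -> R) M x : (forall z, g z <= M) ->
  M <= mean e g x -> forall z, e x z -> g z = M.
Proof.
move=> gM Mmean z exz.
have deg_gt0 : 0 < (gdeg e x)%:R :> R by rewrite ltr0n; apply/card_gt0P; exists z.
move: Mmean; rewrite /mean ler_pdivlMr // => Mmean.
have gap_ge0 y : e x y -> 0 <= M - g y by rewrite subr_ge0.
have gap0 : \sum_(y | e x y) (M - g y) = 0.
  apply/eqP; rewrite eq_le sumr_ge0 // andbT sumrB subr_le0.
  by rewrite sumr_const -mulr_natr.
exact/esym/subr0_eq/(psumr_eq0P gap_ge0 gap0).
Qed.

End Mean.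

Lemma uhatD_le0 {V : Type} {R : realType} {m} (u : 'I_m -> V -> R) x {p l} :
  (forall q, 0 <= u q x) -> p != l -> uhat u p x + uhat u l x <= 0.
Proof.
move=> u_ge0 neq_pl; set rest := \sum_(q < m | (q != p) && (q != l)) u q x.
have restp : \sum_(q < m | q != p) u q x = u l x + rest by rewrite (bigD1 l) // eq_sym.
have restl : \sum_(q < m | q != l) u q x = u p x + rest.
  by rewrite (bigD1 p) //; congr (_ + _); apply: eq_bigl => q; rewrite andbC.
have : 0 <= rest by apply: sumr_ge0.
by rewrite /uhat restp restl; lra.
Qed.

Section System.
Context {V : finType} {e : rel V} {R : realType} {m : nat} {H : V -> R -> R}
  {f : 'I_m -> V -> R -> R} {phi : 'I_m -> V -> R}.
Hypothesis H0 : forall x, H x 0 = 0.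
Hypothesis f0 : forall l x, f l x 0 = 0.
Hypothesis phi_ge0 : forall l x, in_boundary e R x -> 0 <= phi l x.
Hypothesis H_mono : forall x s t, 0 <= s -> s <= t -> H x s <= H x t.
Hypothesis f_mono : forall l x s t, 0 <= s -> s <= t -> f l x s <= f l x t.

Section Solution.
Context {u : 'I_m -> V -> R} (u_sol : solves_S e H f phi u).

Lemma solution_ge0 l x : 0 <= u l x.
Proof.
have [bx|ix] := pselect (in_boundary e R x).
  by rewrite (proj2 (u_sol l x) bx) phi_ge0.
by rewrite (proj1 (u_sol l x) ix) le_max lexx orbT.
Qed.

Lemma f_solution_ge0 l x : 0 <= f l x (u l x).
Proof. by rewrite -(f0 l x) f_mono ?solution_ge0. Qed.

Lemma solution_interior {l x} : ~ in_boundary e R x ->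
  u l x = Num.max (oddext (H x) (mean e (uhat u l) x) - f l x (u l x)) 0.
Proof.
by move=> ix; rewrite mean_uhat {1}(proj1 (u_sol l x) ix) /oddext solution_ge0.
Qed.

Lemma solution_interior_pos {l x} : ~ in_boundary e R x -> 0 < u l x ->
  u l x = oddext (H x) (mean e (uhat u l) x) - f l x (u l x).
Proof.
move=> ix ul_gt0.
by move: (solution_interior (l := l) ix); case: ler0P; lra.
Qed.

Lemma oddextH_uhat_le x {p l} : p != l ->
  oddext (H x) (mean e (uhat u p) x) <= - oddext (H x) (mean e (uhat u l) x).
Proof.
move=> neq_pl; rewrite -(oddextN (H0 x)); apply: (oddext_nondecreasing (H0 x) (H_mono x)).
have means_ge0 q : 0 <= mean e (u q) x by apply/mean_ge0/solution_ge0.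
by have := uhatD_le0 (fun q => mean e (u q)) x means_ge0 neq_pl; rewrite !mean_uhat; lra.
Qed.

(* Segregation: H̃(mean û^l) > 0 where u^l > 0, and the means of the û's are
   pairwise of nonpositive sum, so the equation forces the other components to
   vanish. *)
Lemma solution_segregated {l p x} : ~ in_boundary e R x -> 0 < u l x ->
  p != l -> u p x = 0.
Proof.
move=> ix ul_gt0 neq_pl.
have := solution_interior_pos ix ul_gt0; have := f_solution_ge0 l x.
have := oddextH_uhat_le x neq_pl; have := f_solution_ge0 p x.
by move: (solution_interior (l := p) ix); case: ler0P => //; lra.
Qed.

Lemma uhat_interior_pos {l x} : ~ in_boundary e R x -> 0 < u l x ->
  uhat u l x = oddext (H x) (mean e (uhat u l) x) - f l x (u l x).
Proof.
move=> ix ul_gt0; rewrite /uhat big1 ?subr0; first exact: solution_interior_pos.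
by move=> p; apply: solution_segregated ix ul_gt0.
Qed.

Lemma uhat_interior_ge {l x} : ~ in_boundary e R x ->
  oddext (H x) (mean e (uhat u l) x) - f l x (u l x) <= uhat u l x.
Proof.
move=> ix; have [ul_gt0|ul_le0] := ltP 0 (u l x); first by rewrite uhat_interior_pos.
have ul0 : u l x = 0 by apply/eqP; rewrite eq_le ul_le0 solution_ge0.
have HA_le0 : oddext (H x) (mean e (uhat u l) x) <= 0.
  by move: (solution_interior (l := l) ix); rewrite ul0 f0 subr0; case: ler0P => //; lra.
rewrite ul0 f0 subr0 [uhat u l x]/uhat ul0 sub0r.
have [[p /andP[neq_pl up_gt0]]|no_pos] := pselect (exists p, (p != l) && (0 < u p x)).
  rewrite (bigD1 p) //= big1 ?addr0 => [|q /andP[_]]; last exact: solution_segregated.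
  have := solution_interior_pos ix up_gt0; have := f_solution_ge0 p x.
  by have := oddextH_uhat_le x neq_pl; lra.
rewrite big1 ?oppr0 // => p neq_pl.
apply/eqP; rewrite eq_le solution_ge0 andbT leNgt; apply/negP=> up_gt0.
by apply: no_pos; exists p; rewrite neq_pl.
Qed.

End Solution.

Section Comparison.
Hypothesis econn : conn_graph e.
Hypothesis H_lip : forall x s t, 0 <= s -> 0 <= t -> `|H x s - H x t| <= `|s - t|.
Variables u v : 'I_m -> V -> R.
Hypothesis u_sol : solves_S e H f phi u.
Hypothesis v_sol : solves_S e H f phi v.
Variable l : 'I_m.

Let w x := uhat u l x - uhat v l x.

Lemma solutions_eq_boundary q {x} : in_boundary e R x -> u q x = v q x.
Proof. by move=> bx; rewrite (proj2 (u_sol q x) bx) (proj2 (v_sol q x) bx). Qed.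

Lemma uhat_diff_boundary {x} : in_boundary e R x -> w x = 0.
Proof.
move=> bx; rewrite /w /uhat (solutions_eq_boundary l bx).
by rewrite (eq_bigr _ (fun q _ => solutions_eq_boundary q bx)) subrr.
Qed.

Lemma uhat_diff_le {x} : ~ in_boundary e R x -> v l x < u l x ->
  w x <= oddext (H x) (mean e (uhat u l) x) - oddext (H x) (mean e (uhat v l) x).
Proof.
move=> ix lt_vu; have ul_gt0 := le_lt_trans (solution_ge0 v_sol l x) lt_vu.
rewrite /w (uhat_interior_pos u_sol ix ul_gt0).
have := uhat_interior_ge v_sol (l := l) ix.
by have := f_mono l x _ _ (solution_ge0 v_sol l x) (ltW lt_vu); lra.
Qed.

Lemma uhat_diff_max_nbr M x : (forall z, w z <= M) -> 0 < M ->
  w x = M -> v l x < u l x -> forall z, e x z -> w z = M.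
Proof.
move=> wM M_gt0 wx lt_vu.
have ix : ~ in_boundary e R x.
  by move=> bx; move: lt_vu; rewrite (solutions_eq_boundary l bx) ltxx.
have := uhat_diff_le ix lt_vu; rewrite wx.
have [le_vu|lt_uv] := leP (mean e (uhat v l) x) (mean e (uhat u l) x).
  move=> /le_trans /(_ (oddext_lip (H0 x) (H_lip x) le_vu)).
  by rewrite -meanB => Mmean; apply: mean_ge_max_nbr.
by have := oddext_nondecreasing (H0 x) (H_mono x) _ _ (ltW lt_uv); lra.
Qed.

Lemma uhat_diff_max_le : exists2 x0, u l x0 <= v l x0 & forall x, w x <= w x0.
Proof.
have [b bb] := boundary_exists e R econn.
have [x1 _ wmax] := @arg_maxP _ R V b predT w isT.
set M := w x1 in wmax; have {}wmax z : w z <= M by apply: wmax.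
have [[x0 le_uv wx0]|no_max] := pselect (exists2 x0, u l x0 <= v l x0 & w x0 = M).
  by exists x0 => // x; rewrite wx0.
have lt_vu z : w z = M -> v l z < u l z.
  by move=> wz; rewrite ltNge; apply/negP=> le_uv; apply: no_max; exists z.
have M_gt0 : 0 < M.
  rewrite lt_def -(uhat_diff_boundary bb) wmax andbT; apply/eqP=> wbM.
  by move: (lt_vu b (esym wbM)); rewrite (solutions_eq_boundary l bb) ltxx.
have : w b = M.
  apply: (@connect_invariant _ e (fun z => w z = M) x1) => //.
    by move=> z z' wz; apply: uhat_diff_max_nbr => //; apply: lt_vu.
  by case: econn => _ [_ []].
by rewrite uhat_diff_boundary // => M0; rewrite M0 ltxx in M_gt0.
Qed.

End Comparison.
End System.

Local Open Scope classical_set_scope.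

Theorem lemma3 (V : finType) (e : rel V) (R : realType) (m : nat)
  (H : V -> R -> R) (f : 'I_m -> V -> R -> R) (phi : 'I_m -> V -> R)
  (u v : 'I_m -> V -> R) :
  conn_graph e ->
  (0 < m)%N ->
  (forall x, {within [set s : R | 0 <= s], continuous (H x)}) ->
  (forall l x, {within [set s : R | 0 <= s], continuous (f l x)}) ->
  (forall x, H x 0 = 0) ->
  (forall l x, f l x 0 = 0) ->
  (forall l x, in_boundary e R x -> 0 <= phi l x) ->
  (forall i j x, i != j -> in_boundary e R x -> phi i x * phi j x = 0) ->
  (forall x s t, 0 <= s -> s <= t -> H x s <= H x t) ->
  (forall l x s t, 0 <= s -> s <= t -> f l x s <= f l x t) ->
  (forall x s t, 0 <= s -> 0 <= t -> `|H x s - H x t| <= `|s - t|) ->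
  solves_S e H f phi u ->
  solves_S e H f phi v ->
  forall l : 'I_m,
    (exists2 x0, u l x0 <= v l x0 &
       forall x, uhat u l x - uhat v l x <= uhat u l x0 - uhat v l x0) /\
    (exists2 x0, v l x0 <= u l x0 &
       forall x, uhat v l x - uhat u l x <= uhat v l x0 - uhat u l x0).
Proof.
move=> econn _ _ _ H0 f0 phi_ge0 _ H_mono f_mono H_lip u_sol v_sol l.
have max_le := uhat_diff_max_le H0 f0 phi_ge0 H_mono f_mono econn H_lip.
by split; apply: max_le.
Qed.
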